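(* Let $G$ be a finite non-abelian group and $S\subseteq G$ a nonempty subset, with $\partial S$ its edge boundary in $\mathcal C_G$. (A) If $S$ satisfies any one of: (1) $S\cap Z(G)=\emptyset$; (2) $Z(G)\subseteq S$ and $|S|\le |G|/2$; (3) $S\subseteq Z(G)$; then $\frac{|\partial S|}{|S|}\ge |Z(G)|$. (B) If $S\cap Z(G)\neq\emptyset$ and $Z(G)\setminus S\neq\emptyset$, then $$|\partial S|=|S|\,|Z(G)|+|Z(G)\cap S|\big(|G|-2|S|-|Z(G)\setminus S|\big)+\sum_{u\in S\setminus Z(G)}|\mathcal F_u\setminus S|,$$ where $\mathcal F_u=C(u)\setminus Z(G)$ for $u\in G\setminus Z(G)$.
   Context: For a finite group $G$, the commuting graph $\mathcal C_G$ is the simple undirected graph with vertex set $G$ in which distinct $u,v\in G$ are adjacent iff $uv=vu$. $Z(G)$ is the center of $G$ and $C(v)=\{w\in G: wv=vw\}$ the centralizer of $v$. For $S\subseteq G$, $\partial S$ is the set of edges of $\mathcal C_G$ with one endpoint in $S$ and the other in $G\setminus S$. *)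

From mathcomp Require Import all_boot all_order all_algebra all_fingroup all_solvable.
Set Implicit Arguments. Unset Strict Implicit. Unset Printing Implicit Defensive.

Local Open Scope group_scope.

(* Edge set of the commuting graph restricted to the boundary of S:
   unordered edges {u, v} with u in S, v outside S, and u v = v u.
   (u <> v is automatic since u \in S and v \notin S.) *)
Definition boundary (gT : finGroupType) (S : {set gT}) : {set {set gT}} :=
  [set [set u; v] | u in S, v in ~: S & u * v == v * u].

Definition Fu (gT : finGroupType) (u : gT) : {set gT} :=
  'C[u] :\: 'Z([set: gT]).

From mathcomp Require Import all_boot all_order all_algebra all_fingroup all_solvable.
From mathcomp Require Import zify.
Set Implicit Arguments.
Unset Strict Implicit.
Unset Printing Implicit Defensive.
Local Open Scope group_scope.

(* Write Z for the centre of G.  Every boundary edge {u, v} of S has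
   exactly one endpoint u in S, and v then ranges over C(u) \ S, so
       |∂S| = Σ_{u ∈ S} |C(u) \ S|                              (card_boundary).
   A central u commutes with everything, so C(u) \ S = G \ S; for every u the centre
   lies in C(u), so C(u) \ S is the disjoint union of Z \ S and F_u \ S.  Hence
       |∂S| = |S ∩ Z|·|G \ S| + |S \ Z|·|Z \ S| + Σ_{u ∈ S \ Z} |F_u \ S|
                                                          (card_boundary_split).
   Part (B) is this identity rearranged (boundary_formula).  For part (A) the sum is
   dropped and each hypothesis kills one product: |S ∩ Z| = 0 in case (1),
   |Z \ S| = 0 in case (2) and |S \ Z| = 0 in case (3); cases (2) and (3) also need
   |G \ S| ≥ |Z|, which in case (3) comes from 2|Z| ≤ |G|, i.e. from the centre of a
   non-abelian group having index at least 2 (center_card_half).  Neither part uses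
   the non-emptiness hypotheses of the theorem. *)

Lemma edge_of_pair_inj (T : finType) (S : {set T}) :
  {in [pred p : T * T | (p.1 \in S) && (p.2 \notin S)] &,
    injective (fun p : T * T => [set p.1; p.2])}.
Proof.
move=> [u1 v1] [u2 v2] /andP[/= u1S v1S] /andP[/= u2S v2S] E.
have : u1 \in [set u2; v2] by rewrite -E !inE eqxx.
have : v1 \in [set u2; v2] by rewrite -E !inE eqxx orbT.
rewrite !inE => /orP[/eqP v1u2 | /eqP ->] /orP[/eqP -> | /eqP u1v2] //.
1,2: by rewrite v1u2 u2S in v1S.
by rewrite -u1v2 u1S in v2S.
Qed.

Lemma center_card_half (gT : finGroupType) (G : {group gT}) :
  ~~ abelian G -> (2 * #|'Z(G)| <= #|G|)%N.
Proof.
move=> nabG; rewrite -(Lagrange (center_sub G)) mulnC leq_mul2l indexg_gt1.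
apply/orP; right; apply: contra nabG => sGZ.
by apply/center_idP/eqP; rewrite eqEsubset center_sub.
Qed.

Section CommutingGraphBoundary.

Variable gT : finGroupType.
Implicit Types (S : {set gT}) (u : gT).

Local Notation Z := 'Z([set: gT]).

Lemma card_boundary S : #|boundary S| = (\sum_(u in S) #|'C[u] :\: S|)%N.
Proof.
pose P := [set p : gT * gT | [&& p.1 \in S, p.2 \notin S & p.1 * p.2 == p.2 * p.1]].
have -> : boundary S = (fun p : gT * gT => [set p.1; p.2]) @: P.
  apply/setP => X; apply/imset2P/imsetP.
  - case=> u v uS; rewrite inE => /andP[vS cuv] ->.
    by exists (u, v); rewrite // inE /= uS -in_setC vS.
  - case=> [[u v]]; rewrite inE /= => /and3P[uS vS cuv] ->.
    by exists u v; rewrite // inE in_setC vS.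
rewrite card_in_imset; last first.
  move=> p q; rewrite !inE => /and3P[p1S p2S _] /and3P[q1S q2S _].
  by apply: (@edge_of_pair_inj _ S); apply/andP.
rewrite -sum1_card (eq_bigl _ _ (fun p => in_set _ p)) /=.
rewrite -(pair_big_dep (fun u => u \in S)
  (fun u v => (v \notin S) && (u * v == v * u)) (fun _ _ => 1%N)) /=.
apply: eq_bigr => u uS; rewrite -sum1_card; apply: eq_bigl => v.
by rewrite in_setD; congr (_ && _); apply/eqP/cent1P => /esym.
Qed.

Lemma cent1_central u : u \in Z -> 'C[u] = [set: gT].
Proof.
move=> /centerP[_ cZu]; apply/setP => v; rewrite in_setT; apply/cent1P.
by apply/esym/cZu; rewrite inE.
Qed.

Lemma center_sub_cent1 u : Z \subset 'C[u].
Proof. by apply/subsetP => z /centerP[_ cZz]; apply/cent1P/cZz; rewrite inE. Qed.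

Lemma card_cent1_out u S : #|'C[u] :\: S| = (#|Z :\: S| + #|Fu u :\: S|)%N.
Proof.
rewrite -(cardsID Z ('C[u] :\: S)); congr (_ + _)%N; apply: eq_card => v.
  rewrite in_setI !in_setD; case vZ: (v \in Z); rewrite ?andbF ?andbT //.
  by rewrite (subsetP (center_sub_cent1 u)) ?andbT.
by rewrite /Fu !in_setD andbCA.
Qed.

Lemma card_boundary_split S :
  #|boundary S| = (#|Z :&: S| * #|~: S| + #|S :\: Z| * #|Z :\: S|
                   + \sum_(u in S :\: Z) #|Fu u :\: S|)%N.
Proof.
rewrite card_boundary (big_setID Z) /= -addnA; congr (_ + _)%N.
  rewrite setIC -sum_nat_const; apply: eq_bigr => u /setIP[uZ _].
  by rewrite cent1_central // setTD.
rewrite -sum_nat_const -big_split; apply: eq_bigr => u _.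
exact: card_cent1_out.
Qed.

Lemma center_cardinals S :
  [/\ (#|Z :&: S| + #|S :\: Z| = #|S|)%N, (#|Z :&: S| + #|Z :\: S| = #|Z|)%N
    & (#|S| + #|~: S| = #|[set: gT]|)%N].
Proof. by split; [rewrite setIC cardsID | rewrite cardsID | rewrite cardsC cardsT]. Qed.

Lemma boundary_formula S :
  ((#|boundary S| : int)
    = (#|S| * #|Z|)%:Z
      + (#|Z :&: S|)%:Z * ((#|[set: gT]|)%:Z - 2 * (#|S|)%:Z - (#|Z :\: S|)%:Z)
      + (\sum_(u in S :\: Z) #|Fu u :\: S|)%:Z)%R.
Proof.
rewrite card_boundary_split; move: (\sum_(u in _) _)%N => sumF.
have [cardS cardZ cardG] := center_cardinals S; lia.
Qed.

Lemma boundary_lower_bound S :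
  ~~ abelian [set: gT] ->
  [disjoint S & Z] \/ (Z \subset S /\ (#|S| * 2 <= #|[set: gT]|)%N)
    \/ S \subset Z ->
  (#|S| * #|Z| <= #|boundary S|)%N.
Proof.
move=> nabG hyp.
have halfZ : (2 * #|Z| <= #|[set: gT]|)%N := center_card_half nabG.
have [cardS cardZ cardG] := center_cardinals S.
rewrite card_boundary_split; move: (\sum_(u in _) _)%N => sumF.
case: hyp => [dSZ | [[sZS halfS] | sSZ]].
-
  have noZS : #|Z :&: S| = 0%N by rewrite setIC (disjoint_setI0 dSZ) cards0.
  by nia.
-
  have noZoutS : #|Z :\: S| = 0%N by apply/eqP; rewrite cards_eq0 setD_eq0.
  by nia.
-
  have noSoutZ : #|S :\: Z| = 0%N by apply/eqP; rewrite cards_eq0 setD_eq0.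
  have leSZ : (#|S| <= #|Z|)%N := subset_leq_card sSZ.
  have leZSc : (#|Z| <= #|~: S|)%N by lia.
  move: cardS; rewrite noSoutZ addn0 mul0n addn0 => ->.
  by apply: leq_trans (leq_addr _ _); rewrite leq_mul2l leZSc orbT.
Qed.

End CommutingGraphBoundary.

Theorem lemma3p5 (gT : finGroupType) (S : {set gT}) :
  ~~ abelian [set: gT] -> S != set0 ->
  ( ( [disjoint S & 'Z([set: gT])]
      \/ ('Z([set: gT]) \subset S /\ (#|S| * 2 <= #|[set: gT]|)%N)
      \/ S \subset 'Z([set: gT]) ) ->
    (#|S| * #|'Z([set: gT])| <= #|boundary S|)%N )
  /\
  ( S :&: 'Z([set: gT]) != set0 -> 'Z([set: gT]) :\: S != set0 ->
    (#|boundary S| : int)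
      = (#|S| * #|'Z([set: gT])|)%:Z
        + (#|'Z([set: gT]) :&: S|)%:Z
            * ((#|[set: gT]|)%:Z - 2 * (#|S|)%:Z - (#|'Z([set: gT]) :\: S|)%:Z)
        + (\sum_(u in S :\: 'Z([set: gT])) #|Fu u :\: S|)%:Z )%R.
Proof.
move=> nabG _; split; first exact: boundary_lower_bound.
by move=> _ _; apply: boundary_formula.
Qed.
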